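(* Consider the following online algorithm for Submodular Welfare with bidders $1,\dots,n$, utilities $f_1,\dots,f_n$, and items $1,\dots,m$ arriving in this (adversarial) order. Set $S^0_j=\emptyset$ for all $j$. For $i=1,\dots,m$: set $S^i_j=S^{i-1}_j$ for all $j$; order the bidders as $j_1,\dots,j_n$ so that $f_{j_1}(i\mid S^{i-1}_{j_1})\ge f_{j_2}(i\mid S^{i-1}_{j_2})\ge\dots\ge f_{j_n}(i\mid S^{i-1}_{j_n})$; choose a random bidder $j^i$ with $\Pr[j^i=j_r]=2^{-r}$ for $r=1,\dots,n$ (with the remaining probability $2^{-n}$ no bidder is chosen); if a bidder $j^i$ was chosen and $f_{j^i}(i\mid S^{i-1}_{j^i})\ge0$, set $S^i_{j^i}\leftarrow S^i_{j^i}\cup\{i\}$. Let $O=(O_1,\dots,O_n)$ be a fixed optimal allocation, i.e., a maximizer of $\sum_j f_j(O_j)$ over pairwise disjoint $O_1,\dots,O_n\subseteq\{1,\dots,m\}$. For $i=0,\dots,m$ let $H^i_j=(O_j\cap\{1,\dots,i\})\cup S^i_j$, and write $f(S^i)=\sum_j f_j(S^i_j)$, $f(H^i)=\sum_j f_j(H^i_j)$. Define $P^i=f(S^i)-f(S^{i-1})$ and $K^i=f(H^i)-f(H^{i-1})$. Then for every $i=1,\dots,m$, $\mathbb E[K^i]\le 2\,\mathbb E[P^i]$.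
   Context: Each $f_j:2^{\{1,\dots,m\}}\to\mathbb R_{\ge0}$ is a non-negative submodular (not necessarily monotone) function, i.e., $f_j(A\cup B)+f_j(A\cap B)\le f_j(A)+f_j(B)$ for all $A,B$. Notation: $f_j(i\mid S)=f_j(S\cup\{i\})-f_j(S)$. Ties in the ordering of bidders are broken arbitrarily. *)

From mathcomp Require Import all_boot all_order all_algebra all_fingroup.
Set Implicit Arguments. Unset Strict Implicit. Unset Printing Implicit Defensive.
Import Order.TTheory GRing.Theory Num.Theory.
Local Open Scope ring_scope.

(* Bidders are 'I_n (bidder j+1 of the paper is ordinal j), items are 'I_m
   (item i of the paper, 1 <= i <= m, is ordinal i-1). Step k (k = 0..m-1)
   processes item k, i.e. item k+1 of the paper. *)

Definition marg (R : numDomainType) (T : finType) (g : {set T} -> R)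
  (S : {set T}) (x : T) : R := g (x |: S) - g S.

Definition submodular (R : numDomainType) (T : finType) (g : {set T} -> R) :=
  forall A B : {set T}, g (A :|: B) + g (A :&: B) <= g A + g B.

(* One step of the algorithm at step k (item k), from allocation S, with the
   bidder ordering sigma (sigma r = bidder of rank r+1) and random rank ch
   (Some r : rank r+1 chosen; None : no bidder chosen). *)
Definition alloc_step (R : numDomainType) (n m : nat)
  (f : 'I_n -> {set 'I_m} -> R) (k : nat) (S : 'I_n -> {set 'I_m})
  (sigma : {perm 'I_n}) (ch : option 'I_n) : 'I_n -> {set 'I_m} :=
  match (insub k : option 'I_m), ch with
  | Some x, Some r =>
      let j := sigma r in
      if 0 <= marg (f j) (S j) x
      then (fun j' => if j' == j then x |: S j else S j')
      else S
  | _, _ => S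
  end.

(* The ordering used at step k' is tb k' (history before k'),
   i.e. ties may be broken arbitrarily, even history-dependently. *)
Fixpoint alloc_state (R : numDomainType) (n m : nat)
  (f : 'I_n -> {set 'I_m} -> R)
  (tb : nat -> seq (option 'I_n) -> {perm 'I_n})
  (h : seq (option 'I_n)) (k : nat) : 'I_n -> {set 'I_m} :=
  match k with
  | 0 => fun _ => set0
  | k'.+1 => alloc_step f k' (alloc_state f tb h k') (tb k' (take k' h))
                        (nth None h k')
  end.

Definition tb_sorted (R : numDomainType) (n m : nat)
  (f : 'I_n -> {set 'I_m} -> R)
  (tb : nat -> seq (option 'I_n) -> {perm 'I_n}) :=
  forall (k : 'I_m) (h : seq (option 'I_n)), size h = k ->
  let S := alloc_state f tb h k in
  let sigma := tb k h in
  forall r1 r2 : 'I_n, (r1 <= r2)%N ->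
    marg (f (sigma r2)) (S (sigma r2)) k <= marg (f (sigma r1)) (S (sigma r1)) k.

Definition choice_prob (R : numFieldType) (n : nat) (ch : option 'I_n) : R :=
  match ch with
  | None => (2%:R)^-1 ^+ n
  | Some r => (2%:R)^-1 ^+ r.+1
  end.

Definition outcome_prob (R : numFieldType) (n m : nat)
  (c : {ffun 'I_m -> option 'I_n}) : R :=
  \prod_(x : 'I_m) choice_prob R (c x).

Definition history (n m : nat) (c : {ffun 'I_m -> option 'I_n}) :
  seq (option 'I_n) := [seq c x | x <- enum 'I_m].

Definition Expect (R : numFieldType) (n m : nat)
  (X : {ffun 'I_m -> option 'I_n} -> R) : R :=
  \sum_(c : {ffun 'I_m -> option 'I_n}) outcome_prob R c * X c.

Definition welfare (R : numDomainType) (n m : nat)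
  (f : 'I_n -> {set 'I_m} -> R) (S : 'I_n -> {set 'I_m}) : R :=
  \sum_(j : 'I_n) f j (S j).

Definition pairwise_disjoint (n m : nat) (O : 'I_n -> {set 'I_m}) :=
  forall j1 j2 : 'I_n, j1 != j2 -> [disjoint O j1 & O j2].

Definition optimal_allocation (R : numDomainType) (n m : nat)
  (f : 'I_n -> {set 'I_m} -> R) (O : 'I_n -> {set 'I_m}) :=
  pairwise_disjoint O /\
  forall O' : 'I_n -> {set 'I_m}, pairwise_disjoint O' ->
    welfare f O' <= welfare f O.

Definition hybrid (n m : nat) (O S : 'I_n -> {set 'I_m}) (i : nat) :
  'I_n -> {set 'I_m} :=
  fun j => (O j :&: [set x : 'I_m | (x < i)%N]) :|: S j.

Definition P_inc (R : numDomainType) (n m : nat)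
  (f : 'I_n -> {set 'I_m} -> R)
  (tb : nat -> seq (option 'I_n) -> {perm 'I_n}) (i : nat)
  (c : {ffun 'I_m -> option 'I_n}) : R :=
  welfare f (alloc_state f tb (history c) i)
  - welfare f (alloc_state f tb (history c) i.-1).

Definition K_inc (R : numDomainType) (n m : nat)
  (f : 'I_n -> {set 'I_m} -> R)
  (tb : nat -> seq (option 'I_n) -> {perm 'I_n}) (O : 'I_n -> {set 'I_m})
  (i : nat) (c : {ffun 'I_m -> option 'I_n}) : R :=
  welfare f (hybrid O (alloc_state f tb (history c) i) i)
  - welfare f (hybrid O (alloc_state f tb (history c) i.-1) i.-1).

From mathcomp Require Import all_boot all_order all_algebra all_fingroup.
From mathcomp Require Import lra ring.
Import Order.TTheory GRing.Theory Num.Theory.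
Local Open Scope ring_scope.
Set Implicit Arguments. Unset Strict Implicit. Unset Printing Implicit Defensive.

(* Fix every random choice except the rank drawn for item i.  Then S^{i-1},
   H^{i-1} and the bidder ordering are fixed, and the marginal values
   a_j = f_j(i | S^{i-1}_j) are nonincreasing along the ordering; P^i is
   max(a_j, 0) for the chosen bidder j.  As S^{i-1}_j is a subset of H^{i-1}_j,
   which does not contain i, submodularity bounds each marginal value occurring
   in K^i by a_j, so K^i <= P^i + a_{j*} - [j* gets i] a_{j*}, where j* receives
   i in O.  If j* has rank r, every rank r' <= r gives P^i >= max(a_{j*}, 0), so
   E[P^i] >= (1 - 2^-r) max(a_{j*}, 0), while j* gets i with probability 2^-r
   when a_{j*} >= 0; summing, E[K^i] <= 2 E[P^i]. *)

Lemma big_option (V : nmodType) (T : finType) (F : option T -> V) :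
  \sum_(o : option T) F o = F None + \sum_(t : T) F (Some t).
Proof.
rewrite (bigD1 None) //=; congr (_ + _).
rewrite (reindex_omap (@Some T) id) //=; last by case.
by apply: eq_bigl => t; rewrite eqxx.
Qed.

Lemma submodular_marg_antimono (R : realDomainType) (T : finType)
    (g : {set T} -> R) (S H : {set T}) (x : T) :
  submodular g -> S \subset H -> x \notin H -> marg g H x <= marg g S x.
Proof.
move=> g_sub SH xH.
have xH0 : [set x] :&: H = set0.
  by apply/setP => y; rewrite !inE; case: eqP => // ->; exact: negbTE.
have := g_sub (x |: S) H.
rewrite -setUA (setUidPr SH) setIUl (setIidPl SH) xH0 set0U /marg; lra.
Qed.

Section RankChoice.
Variable R : realFieldType.

Lemma sum_half_powers N : \sum_(r < N) (2%:R : R)^-1 ^+ r.+1 + 2%:R^-1 ^+ N = 1.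
Proof.
elim: N => [|N IH]; first by rewrite big_ord0 add0r expr0.
have half_half : (2%:R : R)^-1 + 2%:R^-1 = 1 by field.
rewrite big_ord_recr -[RHS]IH /= -addrA; congr (_ + _).
by rewrite exprS -mulrDl half_half mul1r.
Qed.

Lemma choice_prob_ge0 n (o : option 'I_n) : 0 <= choice_prob R o.
Proof. by case: o => [r|]; apply: exprn_ge0; rewrite invr_ge0 ler0n. Qed.

Lemma sum_choice_prob n : \sum_(o : option 'I_n) choice_prob R o = 1.
Proof. by rewrite big_option addrC sum_half_powers. Qed.

Lemma sum_choice_prob_upto n (r0 : 'I_n) :
  \sum_(r < n | (r <= r0)%N) choice_prob R (Some r) + choice_prob R (Some r0) = 1.
Proof.
rewrite -(big_ord_widen n (fun r => (2%:R : R)^-1 ^+ r.+1) (ltn_ord r0)).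
exact: sum_half_powers.
Qed.
End RankChoice.

Section RankedGain.
Variables (R : realFieldType) (n : nat) (s : {perm 'I_n}) (a : 'I_n -> R).

Definition chosen (o : option 'I_n) (j : 'I_n) : bool :=
  if o is Some r then (s r == j) && (0 <= a j) else false.

Definition gain (o : option 'I_n) : R := \sum_j (if chosen o j then a j else 0).

Lemma gain_None : gain None = 0.
Proof. exact: big1. Qed.

Lemma gain_Some r : gain (Some r) = Num.max 0 (a (s r)).
Proof.
rewrite /gain (bigD1 (s r)) //= eqxx big1 => [|j /negbTE sj].
  by rewrite addr0; case: ger0P.
by rewrite eq_sym sj.
Qed.

Lemma gain_ge0 o : 0 <= gain o.
Proof. by case: o => [r|]; rewrite ?gain_Some ?le_max ?lexx ?gain_None. Qed.

Hypothesis a_sorted : forall r1 r2 : 'I_n, (r1 <= r2)%N -> a (s r2) <= a (s r1).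

Lemma expected_gain_ge j :
  Num.max 0 (a j) <=
  \sum_o choice_prob R o * (gain o + (if chosen o j then a j else 0)).
Proof.
set r0 := (s^-1)%g j; have s_r0 : s r0 = j by rewrite permKV.
set M := Num.max 0 (a j).
have per_rank (r : 'I_n) :
    (if (r <= r0)%N then choice_prob R (Some r) * M else 0)
    + (if r == r0 then choice_prob R (Some r) * M else 0)
  <= choice_prob R (Some r)
     * (gain (Some r) + (if chosen (Some r) j then a j else 0)).
  rewrite mulrDr; apply: lerD.
    case: ifP => [le_r_r0|_]; last by rewrite mulr_ge0 ?choice_prob_ge0 ?gain_ge0.
    by rewrite ler_wpM2l ?choice_prob_ge0 // gain_Some le_max2 // -s_r0 a_sorted.
  have -> : chosen (Some r) j = (r == r0) && (0 <= a j).
    by rewrite /= -{1}s_r0 (inj_eq perm_inj).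
  by case: eqP => _; rewrite ?mulr0 //= /M; case: ger0P; rewrite ?mulr0.
rewrite big_option /= gain_None addr0 mulr0 add0r.
apply: le_trans (ler_sum _ (fun r _ => per_rank r)).
rewrite big_split /= -!big_mkcond big_pred1_eq -mulr_suml -mulrDl.
by rewrite sum_choice_prob_upto mul1r.
Qed.

(* [d j] is the marginal value of the item for the hybrid allocation and [ox]
   the bidder receiving it in the optimal allocation, if any. *)
Variable d : 'I_n -> R.
Hypothesis d_le_a : forall j, d j <= a j.

Definition hybrid_gain (ox o : option 'I_n) : R :=
  \sum_j (if (ox == Some j) || chosen o j then d j else 0).

Lemma hybrid_gain_le ox o :
  hybrid_gain ox o <=
  gain o + (if ox is Some j then a j - (if chosen o j then a j else 0) else 0).
Proof.
case: ox => [j0|]; last first.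
  by rewrite addr0; apply: ler_sum => j _ /=; case: ifP => // _; exact: d_le_a.
rewrite /hybrid_gain /gain (bigD1 j0) //= [X in _ <= X + _](bigD1 j0) //=.
rewrite eqxx /=.
have rest :
    \sum_(j | j != j0) (if (Some j0 == Some j) || chosen o j then d j else 0)
  <= \sum_(j | j != j0) (if chosen o j then a j else 0).
  apply: ler_sum => j nj; rewrite -[Some j0 == _]/(j0 == j) eq_sym (negbTE nj) /=.
  by case: ifP => // _; exact: d_le_a.
apply: le_trans (lerD (d_le_a j0) rest) _.
by rewrite [leRHS]addrC addrA subrK.
Qed.

Lemma expected_gain_double ox :
  0 <= \sum_o choice_prob R o * (2%:R * gain o - hybrid_gain ox o).
Proof.
set c := fun o =>
  if ox is Some j then a j - (if chosen o j then a j else 0) else 0.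
have bound o : choice_prob R o * (gain o - c o)
            <= choice_prob R o * (2%:R * gain o - hybrid_gain ox o).
  by rewrite ler_wpM2l ?choice_prob_ge0 // /c; have := hybrid_gain_le ox o; lra.
apply: le_trans (ler_sum _ (fun o _ => bound o)); rewrite /c.
case: ox {c bound} => [j|]; last first.
  by apply: sumr_ge0 => o _; rewrite subr0 mulr_ge0 ?choice_prob_ge0 ?gain_ge0.
under eq_bigr do rewrite opprB addrA mulrBr.
rewrite sumrB -mulr_suml sum_choice_prob mul1r subr_ge0.
by apply: le_trans (expected_gain_ge j); rewrite le_max lexx orbT.
Qed.

End RankedGain.

Lemma mem_disjoint_pick n m (O : 'I_n -> {set 'I_m}) (x : 'I_m) (j : 'I_n) :
  pairwise_disjoint O -> (x \in O j) = ([pick j' | x \in O j'] == Some j).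
Proof.
move=> O_disj; case: pickP => [j0 x_j0|no_j]; last by rewrite no_j.
apply/idP/eqP => [x_j|[<-] //]; congr Some; apply/eqP/negPn/negP => ne.
by rewrite (disjointFr (O_disj _ _ ne) x_j0) in x_j.
Qed.

Definition set_choice n m (x : 'I_m) (c : {ffun 'I_m -> option 'I_n})
    (o : option 'I_n) : {ffun 'I_m -> option 'I_n} :=
  [ffun y => if y == x then o else c y].

Section Resampling.
Variables (R : realFieldType) (n m : nat).
Implicit Type c : {ffun 'I_m -> option 'I_n}.

Lemma sum_set_choice (x : 'I_m) (F : {ffun 'I_m -> option 'I_n} -> R) :
  \sum_c F c
  = \sum_(c : {ffun 'I_m -> option 'I_n} | c x == None)
      \sum_o F (set_choice x c o).
Proof.
rewrite (partition_big (fun c : {ffun 'I_m -> option 'I_n} => c x) xpredT) //=.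
rewrite exchange_big /=; apply: eq_bigr => o _.
rewrite (reindex_onto (set_choice x ^~ o) (set_choice x ^~ None)); last first.
  move=> c /eqP cx; apply/ffunP => y; rewrite !ffunE; case: eqP => // ->.
  by rewrite cx.
apply: eq_bigl => c; rewrite ffunE !eqxx /=.
apply/eqP/eqP => [<-|cx]; first by rewrite ffunE eqxx.
by apply/ffunP => y; rewrite !ffunE; case: eqP => // ->; rewrite cx.
Qed.

Lemma outcome_prob_set_choice (x : 'I_m) c o :
  outcome_prob R (set_choice x c o)
  = choice_prob R o * \prod_(y | y != x) choice_prob R (c y).
Proof.
rewrite /outcome_prob (bigD1 x) //= ffunE eqxx; congr (_ * _).
by apply: eq_bigr => y yx; rewrite ffunE (negbTE yx).
Qed.

Lemma Expect_ge0_set_choice (x : 'I_m) (X : {ffun 'I_m -> option 'I_n} -> R) :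
  (forall c, 0 <= \sum_o choice_prob R o * X (set_choice x c o)) ->
  0 <= Expect X.
Proof.
move=> X_ge0; rewrite /Expect (sum_set_choice x); apply: sumr_ge0 => c _.
under eq_bigr do rewrite outcome_prob_set_choice mulrAC.
rewrite -mulr_suml mulr_ge0 // prodr_ge0 // => y _.
exact: choice_prob_ge0.
Qed.

Lemma Expect_scaleB (k : R) (X Y : {ffun 'I_m -> option 'I_n} -> R) :
  k * Expect X - Expect Y = Expect (fun c => k * X c - Y c).
Proof. by rewrite /Expect mulr_sumr -sumrB; apply: eq_bigr => c _; ring. Qed.

Lemma size_history c : size (history c) = m.
Proof. by rewrite size_map size_enum_ord. Qed.

Lemma nth_history c (y : 'I_m) : nth None (history c) y = c y.
Proof. by rewrite (nth_map y) ?size_enum_ord // nth_ord_enum. Qed.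

Lemma take_history_set_choice (x : 'I_m) c o :
  take x (history (set_choice x c o)) = take x (history c).
Proof.
rewrite /history; set s := enum _.
rewrite -[take x (map _ s)]map_take -[take x (map c s)]map_take.
apply/eq_in_map => y /index_ltn; rewrite /s index_enum_ord ffunE.
by case: eqP => // ->; rewrite ltnn.
Qed.

End Resampling.

Section Algorithm.
Variables (R : realFieldType) (n m : nat) (f : 'I_n -> {set 'I_m} -> R)
  (tb : nat -> seq (option 'I_n) -> {perm 'I_n}).

Definition item_margs (S : 'I_n -> {set 'I_m}) (x : 'I_m) (j : 'I_n) : R :=
  marg (f j) (S j) x.

Lemma alloc_stepE (x : 'I_m) S s o j :
  alloc_step f x S s o j
  = if chosen s (item_margs S x) o j then x |: S j else S j.
Proof.
rewrite /alloc_step valK /chosen; case: o => [r|] //=.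
have [<-|ne] := eqVneq (s r) j; first by case: ifP => _; rewrite ?eqxx.
by case: ifP => _ //; rewrite ifN_eq // eq_sym.
Qed.

Lemma alloc_state_lt h k j (y : 'I_m) :
  y \in alloc_state f tb h k j -> (y < k)%N.
Proof.
elim: k j => [|k IH] j /=; first by rewrite inE.
rewrite /alloc_step; case: insubP => [x _ xk|_]; last by move/IH/ltnW.
case: (nth None h k) => [r|]; last by move/IH/ltnW.
case: ifP => _; last by move/IH/ltnW.
case: ifP => _; last by move/IH/ltnW.
by rewrite !inE => /orP[/eqP->|/IH/ltnW //]; rewrite xk.
Qed.

Lemma alloc_state_take h h' k :
  take k h = take k h' -> alloc_state f tb h k = alloc_state f tb h' k.
Proof.
elim: k => [|k IH] //= hh'.
have take_eq k' : (k' <= k.+1)%N -> take k' h = take k' h'.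
  by move=> le_k'; rewrite -(minn_idPl le_k') !take_min hh'.
rewrite IH ?take_eq //.
by rewrite -(nth_take None (ltnSn k)) hh' nth_take.
Qed.

Lemma alloc_state_set_choice c (x : 'I_m) o :
  alloc_state f tb (history (set_choice x c o)) x = alloc_state f tb (history c) x.
Proof. by apply: alloc_state_take; rewrite take_history_set_choice. Qed.

Lemma alloc_state_set_choiceS c (x : 'I_m) o :
  alloc_state f tb (history (set_choice x c o)) x.+1
  = alloc_step f x (alloc_state f tb (history c) x) (tb x (take x (history c))) o.
Proof.
rewrite /= alloc_state_set_choice take_history_set_choice nth_history.
by rewrite ffunE eqxx.
Qed.

Lemma welfare_add_item (A B : 'I_n -> {set 'I_m}) (gets : pred 'I_n) (x : 'I_m) :
  (forall j, B j = if gets j then x |: A j else A j) ->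
  welfare f B - welfare f A = \sum_j (if gets j then marg (f j) (A j) x else 0).
Proof.
move=> BE; rewrite /welfare -sumrB; apply: eq_bigr => j _; rewrite BE.
by case: (gets j); rewrite ?subrr.
Qed.

Lemma hybrid_alloc_step (O S : 'I_n -> {set 'I_m}) (x : 'I_m) s o j :
  (forall j (y : 'I_m), y \in S j -> (y < x)%N) ->
  hybrid O (alloc_step f x S s o) x.+1 j
  = if (x \in O j) || chosen s (item_margs S x) o j then x |: hybrid O S x j
    else hybrid O S x j.
Proof.
move=> S_lt; rewrite /hybrid alloc_stepE; apply/setP => y.
have x_S : (x \in S j) = false by apply/negP => /S_lt; rewrite ltnn.
have [->|y_x] := eqVneq y x.
  by case: chosen; case: ifP;
     rewrite !inE ?eqxx ?ltnSn ?ltnn ?x_S ?andbT ?andbF ?orbF.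
have ltSE : (y < x.+1)%N = (y < x)%N.
  by rewrite ltnS leq_eqVlt -[(y == x :> nat)]/(y == x) (negbTE y_x).
by case: chosen; case: ifP; rewrite !inE ?(negbTE y_x) ?ltSE.
Qed.

Section OneStep.
Variables (c : {ffun 'I_m -> option 'I_n}) (x : 'I_m).
Let S := alloc_state f tb (history c) x.
Let s := tb x (take x (history c)).

Lemma P_inc_set_choice o :
  P_inc f tb x.+1 (set_choice x c o) = gain s (item_margs S x) o.
Proof.
rewrite /P_inc alloc_state_set_choiceS [x.+1.-1]/= alloc_state_set_choice.
by apply: welfare_add_item => j; rewrite alloc_stepE.
Qed.

Lemma K_inc_set_choice O o :
  K_inc f tb O x.+1 (set_choice x c o)
  = \sum_j (if (x \in O j) || chosen s (item_margs S x) o j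
            then marg (f j) (hybrid O S x j) x else 0).
Proof.
rewrite /K_inc alloc_state_set_choiceS [x.+1.-1]/= alloc_state_set_choice.
apply: welfare_add_item => j.
by apply: hybrid_alloc_step => j' y /alloc_state_lt.
Qed.

Lemma item_margs_sorted :
  tb_sorted f tb ->
  forall r1 r2 : 'I_n, (r1 <= r2)%N ->
    item_margs S x (s r2) <= item_margs S x (s r1).
Proof.
move=> tb_sort r1 r2 le_r; have := tb_sort x (take x (history c)) _ r1 r2 le_r.
rewrite size_takel ?size_history ?(ltnW (ltn_ord x)) // => /(_ erefl).
by rewrite (@alloc_state_take _ (history c)) // -take_min minnn.
Qed.

Lemma conditional_step_ge0 O :
  (forall j, submodular (f j)) -> tb_sorted f tb -> pairwise_disjoint O ->
  0 <= \sum_o choice_prob R o * (2%:R * P_inc f tb x.+1 (set_choice x c o)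
                                 - K_inc f tb O x.+1 (set_choice x c o)).
Proof.
move=> f_sub tb_sort O_disj.
set d := fun j => marg (f j) (hybrid O S x j) x.
have K_eq o : K_inc f tb O x.+1 (set_choice x c o)
              = hybrid_gain s (item_margs S x) d [pick j | x \in O j] o.
  rewrite K_inc_set_choice; apply: eq_bigr => j _.
  by rewrite (mem_disjoint_pick _ _ O_disj).
under eq_bigr do rewrite P_inc_set_choice K_eq.
apply: expected_gain_double => [r1 r2|j]; first exact: item_margs_sorted.
apply: submodular_marg_antimono => //; first exact: subsetUr.
by rewrite !inE ltnn andbF /=; apply/negP => /alloc_state_lt; rewrite ltnn.
Qed.

End OneStep.

End Algorithm.

Theorem lemma6 (R : realFieldType) (n m : nat)
  (f : 'I_n -> {set 'I_m} -> R)
  (tb : nat -> seq (option 'I_n) -> {perm 'I_n})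
  (O : 'I_n -> {set 'I_m}) :
  (forall (j : 'I_n) (A : {set 'I_m}), 0 <= f j A) ->
  (forall j : 'I_n, submodular (f j)) ->
  tb_sorted f tb ->
  optimal_allocation f O ->
  forall i : nat, (1 <= i <= m)%N ->
    Expect (K_inc f tb O i) <= 2%:R * Expect (P_inc f tb i).
Proof.
move=> _ f_sub tb_sort [O_disj _] [//|k] /andP[_ lt_k_m].
rewrite -subr_ge0 Expect_scaleB.
apply: (Expect_ge0_set_choice (x := Ordinal lt_k_m)) => c.
exact: conditional_step_ge0.
Qed.
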